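(* $P_2 < P_1$, i.e. $P_2\le P_1$ but not $P_1\le P_2$. Moreover, for every finite digraph $G$ with $G<P_1$ we have $G\le P_2$; that is, $P_2$ is the unique coatom (unique greatest lower bound of $P_1$) of $\mathfrak P_{\mathrm{Digraphs}}$.
   Context: A digraph is a pair $(V,E)$ with $E\subseteq V^2$. A homomorphism maps edges to edges; homomorphic equivalence means homomorphisms in both directions. A primitive positive formula is $\exists y_1,\dots,y_n(\psi_1\wedge\dots\wedge\psi_m)$ where each $\psi_i$ is $\bot$, $z_1=z_2$, or $E(z_1,z_2)$. For $H=(V,E)$, a pp power of dimension $d$ is the digraph on $V^d$ with edges $\{(u,v): \phi(u,v)\text{ holds in }H\}$ for a pp formula $\phi(x_1,\dots,x_d,y_1,\dots,y_d)$. $H\le G$ means $G$ is homomorphically equivalent to a pp power of $H$; $H<G$ means $H\le G$ and not $G\le H$; $\mathfrak P_{\mathrm{Digraphs}}$ is the poset of finite digraphs modulo mutual $\le$. $P_1$ is one vertex with no edges; $P_2$ has vertices $\{0,1\}$ and the single edge $(0,1)$. *)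

From Stdlib Require Import List.
From mathcomp Require Import all_boot.
Set Implicit Arguments. Unset Strict Implicit. Unset Printing Implicit Defensive.

Record digraph := Digraph { vert : finType; edge : vert -> vert -> Prop }.

Definition hom (G H : digraph) (f : vert G -> vert H) : Prop :=
  forall u v, edge u v -> edge (f u) (f v).
Definition hom_exists (G H : digraph) : Prop := exists f, @hom G H f.
Definition hom_equiv (G H : digraph) : Prop := hom_exists G H /\ hom_exists H G.

Inductive atom (k : nat) : Type :=
| ABot : atom k
| AEq : 'I_k -> 'I_k -> atom k
| AEdge : 'I_k -> 'I_k -> atom k.

(* A primitive positive formula with m free variables:
   exists y_1..y_n (psi_1 /\ ... /\ psi_r); the atoms range over the
   m free variables followed by the n quantified variables. *)
Record ppformula (m : nat) := PPFormula {
  pp_nex : nat;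
  pp_atoms : seq (atom (m + pp_nex)) }.

Definition atom_holds (H : digraph) (k : nat) (s : 'I_k -> vert H) (a : atom k)
  : Prop :=
  match a with
  | ABot => False
  | AEq i j => s i = s j
  | AEdge i j => edge (s i) (s j)
  end.

Definition join_assign (T : Type) (m n : nat) (a : 'I_m -> T) (b : 'I_n -> T)
  (i : 'I_(m + n)) : T :=
  match split i with inl j => a j | inr j => b j end.

Definition pp_holds (H : digraph) (m : nat) (phi : ppformula m)
  (a : 'I_m -> vert H) : Prop :=
  exists b : 'I_(pp_nex phi) -> vert H,
    List.Forall (atom_holds (join_assign a b)) (pp_atoms phi).

Definition pp_power (H : digraph) (d : nat) (phi : ppformula (d + d)) : digraph :=
  @Digraph {ffun 'I_d -> vert H}
    (fun u v => pp_holds phi (join_assign (fun i => u i) (fun i => v i))).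

Definition pp_le (H G : digraph) : Prop :=
  exists (d : nat) (phi : ppformula (d + d)), 0 < d /\ hom_equiv G (@pp_power H d phi).
Definition pp_lt (H G : digraph) : Prop := pp_le H G /\ ~ pp_le G H.

Definition P1 : digraph := @Digraph unit (fun _ _ => False).
Definition P2 : digraph := @Digraph bool (fun a b => a = false /\ b = true).

From mathcomp Require Import all_boot.
From Stdlib Require Import Classical.

Set Implicit Arguments.
Unset Strict Implicit.
Unset Printing Implicit Defensive.

(* The pp powers of P1 have a single vertex, so P1 <= G forces G to be
   edgeless or to have a loop, and conversely every nonempty such G is
   equivalent to a pp power of any nonempty digraph (by the formulas bot and
   true).  P2 has an edge but no loop, whence P2 < P1.  If G < P1 then G is
   nonempty and, by the above, has an edge but no loop; such a G is below P2,
   because the pp power of G given by x1 = x2 /\ E(y1, y2) is homomorphically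
   equivalent to P2: its edges go from diagonal pairs to non-diagonal ones. *)

Lemma join_assign_lshift T m n (a : 'I_m -> T) (b : 'I_n -> T) (i : 'I_m) :
  join_assign a b (lshift n i) = a i.
Proof. by rewrite /join_assign (unsplitK (inl i)). Qed.

Lemma join_assign_rshift T m n (a : 'I_m -> T) (b : 'I_n -> T) (i : 'I_n) :
  join_assign a b (rshift m i) = b i.
Proof. by rewrite /join_assign (unsplitK (inr i)). Qed.

Section PPVariables.

Variables (T : Type) (d n : nat).

Definition xvar (i : 'I_d) : 'I_(d + d + n) := lshift n (lshift d i).
Definition yvar (i : 'I_d) : 'I_(d + d + n) := lshift n (rshift d i).

Lemma join_assign_xvar (u v : 'I_d -> T) (b : 'I_n -> T) i :
  join_assign (join_assign u v) b (xvar i) = u i.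
Proof. by rewrite /xvar !join_assign_lshift. Qed.

Lemma join_assign_yvar (u v : 'I_d -> T) (b : 'I_n -> T) i :
  join_assign (join_assign u v) b (yvar i) = v i.
Proof. by rewrite /yvar join_assign_lshift join_assign_rshift. Qed.

End PPVariables.

Definition pp_false m : ppformula m := @PPFormula m 0 [:: ABot _].
Definition pp_true m : ppformula m := @PPFormula m 0 [::].

Lemma pp_holds_false H m (a : 'I_m -> vert H) : ~ pp_holds (pp_false m) a.
Proof. by case=> b /List.Forall_cons_iff []. Qed.

Lemma pp_holds_true H m (a : 'I_m -> vert H) : pp_holds (pp_true m) a.
Proof. by exists (ffun0 (card_ord 0)). Qed.

Definition phi_diag_edge : ppformula (2 + 2) :=
  @PPFormula _ 0 [:: AEq (xvar 0 ord0) (xvar 0 ord_max);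
                     AEdge (yvar 0 ord0) (yvar 0 ord_max)].

Lemma pp_power_diag_edgeE G (u v : {ffun 'I_2 -> vert G}) :
  @edge (pp_power G phi_diag_edge) u v <->
  u ord0 = u ord_max /\ edge (v ord0) (v ord_max).
Proof.
rewrite /= /pp_holds /=; split.
- case=> b /List.Forall_cons_iff [/= u_eq /List.Forall_cons_iff [/= v_edge _]].
  by move: u_eq v_edge; rewrite !join_assign_xvar !join_assign_yvar.
- case=> u_eq v_edge; exists (ffun0 (card_ord 0)).
  apply/List.Forall_cons_iff; split; first by rewrite /= !join_assign_xvar.
  apply/List.Forall_cons_iff; split; last exact: List.Forall_nil.
  by rewrite /= !join_assign_yvar.
Qed.

Lemma pp_le_inhabited H G : pp_le H G -> vert G -> inhabited (vert H).
Proof.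
by case=> d [phi [d_gt0 [[f _] _]]] g; constructor; exact: f g (Ordinal d_gt0).
Qed.

Lemma pp_le_edgeless H G (h : vert H) (g : vert G) :
  (forall u v : vert G, ~ edge u v) -> pp_le H G.
Proof.
move=> G_edgeless; exists 1, (pp_false 2); split=> //; split.
- by exists (fun=> [ffun=> h]) => u v /G_edgeless.
- by exists (fun=> g) => u v /pp_holds_false.
Qed.

Lemma pp_le_loop H G (h : vert H) (w : vert G) : edge w w -> pp_le H G.
Proof.
move=> ww; exists 1, (pp_true 2); split=> //; split.
- by exists (fun=> [ffun=> h]) => u v _; exact: pp_holds_true.
- by exists (fun=> w).
Qed.

Lemma pp_le_subsingleton_loop H G (u v : vert G) :
  (forall x y : vert H, x = y) -> pp_le H G -> edge u v -> exists w, @edge G w w.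
Proof.
move=> H_sub [d [phi [_ [[f hom_f] [g hom_g]]]]] uv.
have fuv : f u = f v by apply/ffunP => i; exact: H_sub.
by exists (g (f u)); apply: hom_g; rewrite {2}fuv; exact: hom_f.
Qed.

Lemma pp_le_loopless_P2 G (a b : vert G) :
  edge a b -> (forall w : vert G, ~ edge w w) -> pp_le G P2.
Proof.
move=> ab G_loopless; exists 2, phi_diag_edge; split=> //; split.
- exists (fun x : bool => [ffun i : 'I_2 => if x && (i == ord_max) then b else a]).
  by move=> x y [-> ->]; apply/pp_power_diag_edgeE; rewrite !ffunE.
- exists (fun p : {ffun 'I_2 -> vert G} => p ord0 != p ord_max).
  move=> p q /pp_power_diag_edgeE [p_eq q_edge]; rewrite p_eq eqxx; split=> //.
  by apply/eqP => q_eq; apply: (G_loopless (q ord0)); rewrite {2}q_eq.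
Qed.

Lemma P2_edge : @edge P2 false true.
Proof. by []. Qed.

Lemma P2_loopless (w : vert P2) : ~ edge w w.
Proof. by case=> -> . Qed.

Theorem mainTheorem3 :
  pp_lt P2 P1 /\ (forall G : digraph, pp_lt G P1 -> pp_le G P2).
Proof.
have P1_subsingleton (x y : vert P1) : x = y by case: x; case: y.
split.
  split; first by apply: (@pp_le_edgeless P2 P1 false tt) => u v [].
  move=> le_P1_P2.
  have [w] := pp_le_subsingleton_loop P1_subsingleton le_P1_P2 P2_edge.
  exact: P2_loopless.
move=> G [le_G_P1 nle_P1_G].
have [g] := pp_le_inhabited le_G_P1 tt.
have [[w ww]|no_loop] := classic (exists w : vert G, edge w w).
  by case: nle_P1_G; exact: (@pp_le_loop P1 G tt w).
have [[a [b ab]]|no_edge] := classic (exists a b : vert G, edge a b).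
  by apply: (pp_le_loopless_P2 ab) => w ww; apply: no_loop; exists w.
case: nle_P1_G; apply: (@pp_le_edgeless P1 G tt g) => u v uv.
by apply: no_edge; exists u, v.
Qed.
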